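(* For $\mathcal{M}=\{k\}\subseteq\mathbb{N}_0$, $k\in\mathbb{N}_0$, the sequence $\mathcal{M}^i$ reaches its limit $\mathcal{M}^\infty=\mathcal{M}_k$ after finitely many steps; specifically $\varphi(\{0\})=\varphi(\{1\})=1$ and $\varphi(\{k\})=5$ for every $k\ge2$.
   Context: A one-heap game is a set $\mathcal{M}\subseteq\mathbb{N}_0$ of moves; from position $x$ one may move to $y\in\mathbb{N}_0$ iff $x-y\in\mathcal{M}$. Misère play: a player who cannot move wins. If $0\in\mathcal{M}$, $P(\mathcal{M})=\varnothing$. Otherwise: a position is an N-position if it has no option or some option is a P-position; otherwise it is a P-position; $P(\mathcal{M})$ is the set of P-positions. $\mathcal{M}^\star=P(\mathcal{M})$, $\mathcal{M}^0=\mathcal{M}$, $\mathcal{M}^i=(\mathcal{M}^{i-1})^\star$; $\mathcal{M}^\infty$ is the pointwise limit (set of $x$ lying in $\mathcal{M}^i$ for all sufficiently large $i$). $\varphi(\mathcal{M})=\min\{i\in\mathbb{N}_0:\ \mathcal{M}^i=\mathcal{M}^\infty\}$. $\mathcal{M}_0=\varnothing$ and for $k\ge1$, $\mathcal{M}_k=\{i(3k-1)+j:\ i\in\mathbb{N}_0,\ k\le j\le2k-1\}$. *)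

From mathcomp Require Import all_boot.
Set Implicit Arguments. Unset Strict Implicit. Unset Printing Implicit Defensive.

(* Auxiliary fuel-based evaluation of "x is a P-position of M", valid when
   0 ∉ M (so that every option y of x satisfies y < x) and fuel > x.
   x is N if it has no option or some option is P; otherwise P. *)
Fixpoint isP_fuel (M : pred nat) (fuel : nat) (x : nat) : bool :=
  match fuel with
  | 0 => false
  | f.+1 =>
      has (fun y => M (x - y)) (iota 0 x) &&
      all (fun y => M (x - y) ==> ~~ isP_fuel M f y) (iota 0 x)
  end.

Definition Pset (M : pred nat) : pred nat :=
  fun x => ~~ M 0 && isP_fuel M x.+1 x.

Definition Miter (i : nat) (M : pred nat) : pred nat := iter i Pset M.

Definition Minf (M : pred nat) (x : nat) : Prop :=
  exists N, forall i, N <= i -> Miter i M x.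

Definition reaches_limit_at (M : pred nat) (i : nat) : Prop :=
  forall x, Miter i M x <-> Minf M x.

Definition phi_is (M : pred nat) (n : nat) : Prop :=
  reaches_limit_at M n /\ forall i, i < n -> ~ reaches_limit_at M i.

(* M_k = { i(3k-1) + j : i ∈ ℕ₀, k ≤ j ≤ 2k-1 }  (j ≤ 2k-1 written j < 2k,
   so that M_0 = ∅ as required). *)
Definition Mk (k : nat) (x : nat) : Prop :=
  exists i j, k <= j < 2 * k /\ x = i * (3 * k - 1) + j.

(* For 0 ∉ M, a set S equals P(M) as soon as every position of S has a move,
   no move joins two positions of S, and every other position that has a move
   can move into S.  With this characterization the iterates of {k} are
   computed explicitly.  For k >= 2, P({k}) = {x | x mod 2k >= k}; each of the
   next three iterates consists of the first one, two or three of the intervals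
   [k,2k), [4k-1,5k-1), [7k-2,8k-2) followed by a tail, periodic modulo 2k for
   the second and third iterate and reduced to {10k-3} for the fourth.  The
   fourth iterate contains [k,2k) and is contained in
   M_k = {x | k <= x mod (3k-1) < 2k}, and any move set sandwiched in this way
   has P-set M_k: residues modulo 3k-1 of moves and of positions of M_k both
   lie in [k,2k), and from any other position subtracting k or 2k-1 lands in
   M_k.  Hence the sequence is constant from step 5 on, and not before.  For
   k = 0, P({0}) = P(∅) = ∅, and {1} is already sandwiched. *)

From mathcomp Require Import all_boot zify.

Set Implicit Arguments.
Unset Strict Implicit.
Unset Printing Implicit Defensive.

Lemma eq_isP_fuel (M1 M2 : pred nat) f :
  M1 =1 M2 -> isP_fuel M1 f =1 isP_fuel M2 f.
Proof.
move=> eqM; elim: f => [|f IHf] x //=.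
by congr (_ && _); [apply: eq_has | apply: eq_all] => y /=; rewrite eqM ?IHf.
Qed.

Lemma eq_Pset (M1 M2 : pred nat) : M1 =1 M2 -> Pset M1 =1 Pset M2.
Proof. by move=> eqM x; rewrite /Pset eqM (eq_isP_fuel _ eqM). Qed.

Section Characterization.

Variables M S : pred nat.
Hypothesis M0 : ~~ M 0.
Hypothesis S_has_move : forall x, S x -> exists2 m, m <= x & M m.
Hypothesis S_no_move : forall x y, y <= x -> S x -> S y -> ~~ M (x - y).
Hypothesis move_into_S :
  forall x m, m <= x -> M m -> ~~ S x -> exists2 y, y <= x & S y && M (x - y).

Lemma isP_fuel_char f x : x < f -> isP_fuel M f x = S x.
Proof.
elim: f x => [//|f IHf] x ltxf /=.
have -> : all (fun y => M (x - y) ==> ~~ isP_fuel M f y) (iota 0 x)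
        = all (fun y => M (x - y) ==> ~~ S y) (iota 0 x).
  by apply/eq_in_all => y; rewrite mem_iota => /andP[_ ltyx]; rewrite IHf //; lia.
have posM m : M m -> 0 < m by rewrite lt0n; apply: contraTneq => ->.
case Sx: (S x).
- apply/andP; split.
    have [m lemx Mm] := S_has_move Sx; apply/hasP; exists (x - m).
      by rewrite mem_iota /=; have := posM _ Mm; lia.
    by rewrite subKn.
  apply/allP => y; rewrite mem_iota => /andP[_ ltyx]; apply/implyP => Mxy.
  by apply/negP => Sy; have := S_no_move (ltnW ltyx) Sx Sy; rewrite Mxy.
- apply/negbTE; rewrite negb_and -has_predC.
  case: hasP => [[y _ Mxy]|//] /=.
  have [z lezx /andP[Sz Mxz]] := move_into_S (leq_subr y x) Mxy (negbT Sx).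
  apply/hasP; exists z; last by rewrite /= Mxz Sz.
  by rewrite mem_iota /=; have := posM _ Mxz; lia.
Qed.

Lemma Pset_char : Pset M =1 S.
Proof. by move=> x; rewrite /Pset M0 isP_fuel_char. Qed.

End Characterization.

Lemma Miter_succ i M S S' : Miter i M =1 S -> Pset S =1 S' -> Miter i.+1 M =1 S'.
Proof. by move=> MiS PS x; rewrite /= (eq_Pset MiS). Qed.

Lemma Miter_fixpoint M S i : Pset S =1 S -> Miter i M =1 S ->
  forall n, Miter (n + i) M =1 S.
Proof. by move=> PS MiS; elim=> [|n IHn] //; rewrite addSn; apply: Miter_succ IHn PS. Qed.

Lemma Minf_fixpoint M S i : Pset S =1 S -> Miter i M =1 S ->
  forall x, Minf M x <-> S x.
Proof.
move=> PS MiS x; have MS := Miter_fixpoint PS MiS; split.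
- by case=> N /(_ (N + i) (leq_addr i N)); rewrite MS.
- by move=> Sx; exists i => j leij; rewrite -(subnK leij) MS.
Qed.

Lemma phi_is_fixpoint M S n : Pset S =1 S -> Miter n M =1 S ->
  (forall i, i < n -> exists x, Miter i M x != S x) -> phi_is M n.
Proof.
move=> PS MnS early; have MinfS := Minf_fixpoint PS MnS.
split=> [x | i ltin reach]; first by rewrite MinfS MnS.
have [x /negP[]] := early i ltin.
by apply/eqP; apply/idP/idP => [/reach/MinfS | /MinfS/reach].
Qed.

Lemma modn_sub x m d : 0 < d -> m <= x ->
  (x - m) %% d = if m %% d <= x %% d then x %% d - m %% d else x %% d + d - m %% d.
Proof. by move=> d_gt0 lemx; rewrite modnB //; case: leqP => _; lia. Qed.

Lemma modn_between q d y : q * d <= y < q.+1 * d -> y %% d = y - q * d.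
Proof.
move=> /andP[leqy ltyq]; rewrite -{1}(subnKC leqy) modnMDl modn_small //.
by rewrite mulSn in ltyq; lia.
Qed.

Lemma eqmod_gap d x y : y = x %[mod d] -> y < x -> y + d <= x.
Proof.
move=> eqyx ltyx; have dvd : d %| x - y by rewrite -eqn_mod_dvd ?(ltnW ltyx) // eqyx.
by have := dvdn_leq _ dvd; rewrite subn_gt0 => /(_ ltyx); lia.
Qed.

Definition Mlim k : pred nat := fun x => k <= x %% (3 * k - 1) < 2 * k.

Lemma Mk_Mlim k x : Mk k x <-> Mlim k x.
Proof.
rewrite /Mlim /=; case: (posnP k) => [-> | k_gt0].
  by split=> [[i [j [/andP[le0j ltj0] _]]] | ]; lia.
split=> [[i [j [rangej ->]]] | range].
  by rewrite modnMDl modn_small //; lia.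
exists (x %/ (3 * k - 1)), (x %% (3 * k - 1)); split=> //.
exact: divn_eq.
Qed.

Lemma Mlim_ge k x : Mlim k x -> k <= x.
Proof. by rewrite /Mlim /=; have := leq_mod x (3 * k - 1); lia. Qed.

Lemma Mlim_move k x : 0 < k -> k <= x -> ~~ Mlim k x ->
  exists2 m, k <= m < 2 * k & (m <= x) && Mlim k (x - m).
Proof.
rewrite /Mlim /= => k_gt0 lekx nMx; have d_gt0 : 0 < 3 * k - 1 by lia.
have := ltn_pmod x d_gt0; have := leq_mod x (3 * k - 1).
case: (ltnP (x %% (3 * k - 1)) k) => [ltrk | lekr] lerx ltrd.
  have ledx : 3 * k - 1 <= x.
    by case: (ltnP x (3 * k - 1)) => // ltxd; rewrite modn_small in ltrk; lia.
  have le2kx : 2 * k - 1 <= x by lia.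
  have mod2k : (2 * k - 1) %% (3 * k - 1) = 2 * k - 1 by apply: modn_small; lia.
  exists (2 * k - 1); first lia.
  by rewrite le2kx modn_sub // mod2k; case: ifP; lia.
have modk : k %% (3 * k - 1) = k by apply: modn_small; lia.
exists k; first lia.
by rewrite lekx modn_sub // modk; case: ifP; lia.
Qed.

Lemma Pset_Mlim k (M : pred nat) : 0 < k ->
  (forall m, k <= m < 2 * k -> M m) -> (forall m, M m -> Mlim k m) -> Pset M =1 Mlim k.
Proof.
move=> k_gt0 Mmid MMlim; have d_gt0 : 0 < 3 * k - 1 by lia.
apply: Pset_char.
- by apply/negP => /MMlim/Mlim_ge; lia.
- by move=> x /Mlim_ge lekx; exists k => //; apply: Mmid; lia.
- move=> x y leyx; rewrite /Mlim /= => Mx My; apply/negP => /MMlim.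
  by rewrite /Mlim /= modn_sub //; case: ifP; lia.
- move=> x m lemx /MMlim/Mlim_ge lekm nMx.
  have [m' range /andP[lem'x Mxm']] := Mlim_move k_gt0 (leq_trans lekm lemx) nMx.
  by exists (x - m'); rewrite ?leq_subr // subKn // Mxm' Mmid.
Qed.

Lemma Mlim_below k x : 1 < k -> x < 10 * k - 2 -> Mlim k x =
  [|| k <= x < 2 * k, 4 * k - 1 <= x < 5 * k - 1, 7 * k - 2 <= x < 8 * k - 2 | x == 10 * k - 3].
Proof.
move=> k_gt1 ltx; rewrite /Mlim /=; have d_gt0 : 0 < 3 * k - 1 by lia.
have [q ltq /andP[lo hi]] : exists2 q, q < 4 & q * (3 * k - 1) <= x < q.+1 * (3 * k - 1).
  by exists (x %/ (3 * k - 1)); rewrite ?leq_divM ?ltn_ceil ?ltn_divLR //; lia.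
rewrite (@modn_between q) ?lo ?hi //.
by case: q ltq lo hi => [|[|[|[|q]]]] // _ lo hi; apply/idP/idP; lia.
Qed.

Definition stage1 k : pred nat := fun x => k <= x %% (2 * k).

Definition stage2 k : pred nat := fun x => (k <= x < 2 * k) || (x %% (2 * k) == 2 * k - 1).

Definition stage3 k : pred nat := fun x =>
  [|| k <= x < 2 * k, 4 * k - 1 <= x < 5 * k - 1 | (7 * k - 2 <= x) && (x %% (2 * k) == k - 2)].

Definition stage4 k : pred nat := fun x =>
  [|| k <= x < 2 * k, 4 * k - 1 <= x < 5 * k - 1, 7 * k - 2 <= x < 8 * k - 2 | x == 10 * k - 3].

Lemma Pset_stage1 k : 0 < k -> Pset (pred1 k) =1 stage1 k.
Proof.
move=> k_gt0; have d_gt0 : 0 < 2 * k by lia.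
have modk : k %% (2 * k) = k by rewrite modn_small //; lia.
apply: Pset_char => /=.
- by rewrite eq_sym -lt0n.
- by move=> x S1x; exists k => //; have := leq_mod x (2 * k); move: S1x; rewrite /stage1; lia.
- move=> x y leyx; rewrite /stage1 => S1x S1y; apply/eqP => xyk.
  have lekx : k <= x by lia.
  by move: S1y; rewrite (_ : y = x - k) ?modn_sub // ?modk; [case: ifP | ]; lia.
- move=> x _ /[swap] /eqP-> lekx S1x; exists (x - k); rewrite ?leq_subr // subKn // eqxx andbT.
  by move: S1x; rewrite /stage1 modn_sub ?modk //; case: ifP; lia.
Qed.

Lemma stage2_block k m : k <= m < 2 * k -> stage2 k m.
Proof. by rewrite /stage2 => ->. Qed.

Lemma Pset_stage2 k : 0 < k -> Pset (stage1 k) =1 stage2 k.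
Proof.
move=> k_gt0; have d_gt0 : 0 < 2 * k by lia.
have modk : k %% (2 * k) = k by rewrite modn_small //; lia.
have ltmod y := ltn_pmod y d_gt0; have lemod y := leq_mod y (2 * k).
have stage2_mod y : stage2 k y -> k <= y %% (2 * k).
  by case/orP => [/andP[leky ltyd] | /eqP->]; [rewrite modn_small | lia].
apply: Pset_char.
- by rewrite /stage1 mod0n -ltnNge.
- move=> x /stage2_mod lekr; exists k; last by rewrite /stage1 modk.
  by have := lemod x; lia.
- move=> x y leyx S2x /stage2_mod lekry; rewrite /stage1 -ltnNge.
  case/orP: S2x => [/andP[_ ltxd] | /eqP rxE].
    by have := lemod (x - y); have := lemod y; lia.
  by rewrite modn_sub // rxE; case: ifP; have := ltmod y; lia.
- move=> x m lemx S1m nS2x; have /norP[notI0 /eqP rxN] := nS2x.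
  have lekx : k <= x by have := lemod m; move: S1m; rewrite /stage1; lia.
  have ledx : 2 * k <= x by lia.
  have := ltmod x; case: (ltnP (x %% (2 * k)) k) => [ltrk | lekr] ltrd.
    exists k => //; rewrite stage2_block /=; last lia.
    by rewrite /stage1 modn_sub // modk; case: ifP; lia.
  have le_rx := lemod x; have le_r1x : (x %% (2 * k)).+1 <= x by lia.
  exists (x %% (2 * k)).+1 => //; rewrite stage2_block /=; last lia.
  have modr1 : (x %% (2 * k)).+1 %% (2 * k) = (x %% (2 * k)).+1 by apply: modn_small; lia.
  by rewrite /stage1 modn_sub // modr1; case: ifP; lia.
Qed.

Section LaterStages.

Variable k : nat.
Hypothesis k_gt1 : 1 < k.

Lemma stage3_blocks y : (k <= y < 2 * k) || (4 * k - 1 <= y < 5 * k - 1) -> stage3 k y.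
Proof. by rewrite /stage3 => /orP[-> | ->]; rewrite ?orbT. Qed.

Lemma stage3_tail y : 7 * k - 2 <= y -> y %% (2 * k) = k - 2 -> stage3 k y.
Proof. by move=> le7y ry; rewrite /stage3 le7y ry eqxx !orbT. Qed.

Lemma stage3_below x : x < 7 * k - 2 -> stage3 k x = Mlim k x.
Proof. by move=> ltx; rewrite Mlim_below /stage3 //; lia. Qed.

Lemma stage3_mod y : stage3 k y ->
  [\/ k <= y < 2 * k /\ y %% (2 * k) = y,
      4 * k - 1 <= y < 4 * k /\ y %% (2 * k) = y - 2 * k,
      4 * k <= y < 5 * k - 1 /\ y %% (2 * k) = y - 4 * k
    | 7 * k - 2 <= y /\ y %% (2 * k) = k - 2].
Proof.
case/or3P => [/andP[leky ltyd] | /andP[ge4 lt5] | /andP[ge7 /eqP ry]]; last by apply: Or44.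
- by apply: Or41; rewrite leky ltyd modn_small.
- case: (ltnP y (4 * k)) => [lt4 | ge4'].
    by apply: Or42; rewrite (@modn_between 1); lia.
  by apply: Or43; rewrite (@modn_between 2); lia.
Qed.

Lemma stage3_no_move x y : y <= x -> stage3 k x -> stage3 k y -> ~~ stage2 k (x - y).
Proof.
move=> leyx S3x S3y; have d_gt0 : 0 < 2 * k by lia.
have small : x - y < 2 * k -> (x - y) %% (2 * k) = x - y by exact: modn_small.
have := modn_sub d_gt0 leyx; rewrite /stage2 negb_or.
case: (stage3_mod S3x) => -[? ->]; case: (stage3_mod S3y) => -[? ->];
  case: ifP; lia.
Qed.

(* With r = x mod 2k: if r - (k-2) is, modulo 2k, a residue of [k,2k), move
   that far to land in the tail; otherwise move to r+1, the move being -1 mod 2k. *)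
Lemma stage3_move_tail x : 7 * k - 2 <= x -> x %% (2 * k) != k - 2 ->
  exists2 y, y <= x & stage3 k y && stage2 k (x - y).
Proof.
move=> le7x /eqP; have d_gt0 : 0 < 2 * k by lia.
have ltr := ltn_pmod x d_gt0; have ler := leq_mod x (2 * k).
move: ltr ler; set r := x %% (2 * k) => ltr ler neqr.
have gap j : r + j * (2 * k) < x -> r + j * (2 * k) + 2 * k <= x.
  by apply: eqmod_gap; rewrite addnC modnMDl modn_small.
case: (ltnP r (k - 2)) => [ltrk | gerk].
  have ler8 := gap 3 ltac:(lia); have lemx : r + k + 2 <= x by lia.
  have modm : (r + k + 2) %% (2 * k) = r + k + 2 by apply: modn_small; lia.
  exists (x - (r + k + 2)); first exact: leq_subr.
  rewrite subKn // stage2_block ?andbT; last lia.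
  by apply: stage3_tail; [lia | rewrite modn_sub // modm -/r; case: ifP; lia].
case: (ltnP r (2 * k - 2)) => [ltr2 | ger2].
  have lerx : r.+1 <= x by lia.
  have modm : r.+1 %% (2 * k) = r.+1 by apply: modn_small; lia.
  exists r.+1 => //; rewrite stage3_blocks /=; last lia.
  by rewrite /stage2 modn_sub // modm -/r; case: ifP; lia.
have ler6 := gap 2 ltac:(lia); have lemx : r - k + 2 <= x by lia.
have modm : (r - k + 2) %% (2 * k) = r - k + 2 by apply: modn_small; lia.
exists (x - (r - k + 2)); first exact: leq_subr.
rewrite subKn // stage2_block ?andbT; last lia.
by apply: stage3_tail; [lia | rewrite modn_sub // modm -/r; case: ifP; lia].
Qed.

Lemma stage3_move x m : m <= x -> stage2 k m -> ~~ stage3 k x ->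
  exists2 y, y <= x & stage3 k y && stage2 k (x - y).
Proof.
move=> lemx S2m nS3x.
case: (leqP (7 * k - 2) x) => [le7x | lt7x].
  by apply: stage3_move_tail => //; apply: contra nS3x => /eqP; apply: stage3_tail.
have lekx : k <= x.
  by move: S2m; rewrite /stage2; have := leq_mod m (2 * k); lia.
rewrite stage3_below // in nS3x.
have [m' range /andP[lem'x Mxm']] := Mlim_move (ltnW k_gt1) lekx nS3x.
exists (x - m'); rewrite ?leq_subr // subKn // stage2_block // andbT.
by rewrite stage3_below //; lia.
Qed.

Lemma Pset_stage3 : Pset (stage2 k) =1 stage3 k.
Proof.
apply: Pset_char; first by rewrite /stage2 mod0n; lia.
- move=> x S3x; exists k; last by apply: stage2_block; lia.
  by case: (stage3_mod S3x) => -[]; lia.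
- exact: stage3_no_move.
- exact: stage3_move.
Qed.

Lemma stage3_tail_mul q : stage3 k (7 * k - 2 + q * (2 * k)).
Proof. by apply: stage3_tail; [lia | rewrite addnC modnMDl (@modn_between 3); lia]. Qed.

Lemma stage3_cases y : stage3 k y ->
  [|| k <= y < 2 * k, 4 * k - 1 <= y < 5 * k - 1, y == 7 * k - 2 | 9 * k - 2 <= y].
Proof.
move=> S3y; case: (stage3_mod S3y) => [[? _] | [? _] | [? _] | [ge7 ry]]; try lia.
have [->|ne7] := eqVneq y (7 * k - 2); first by rewrite /= !orbT.
have mod7 : (7 * k - 2) %% (2 * k) = k - 2 by rewrite (@modn_between 3); lia.
have := @eqmod_gap (2 * k) y (7 * k - 2); rewrite mod7 ry => /(_ erefl).
by move=> /(_ ltac:(lia)); lia.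
Qed.

Lemma stage4E x : stage4 k x = Mlim k x && (x < 10 * k - 2).
Proof.
case: (ltnP x (10 * k - 2)) => [ltx | gex]; first by rewrite Mlim_below // andbT.
by rewrite andbF /stage4; lia.
Qed.

Lemma stage4_no_move x y : y <= x -> stage4 k x -> stage4 k y -> ~~ stage3 k (x - y).
Proof.
move=> leyx S4x S4y; apply/negP => /stage3_cases.
by move: S4x S4y; rewrite /stage4; lia.
Qed.

(* A move in the tail of stage 3 needs a target congruent to x - (7k-2) modulo
   2k.  Stage 4 has targets in every residue class, the class k-1 only at 7k-1,
   from where the move is in the tail or equals 5k-2. *)
Lemma stage4_move_tail x : 10 * k - 2 <= x ->
  exists2 y, y <= x & stage4 k y && stage3 k (x - y).
Proof.
move=> le10x; have d_gt0 : 0 < 2 * k by lia.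
have [q [r [ltr xE]]] : exists q r, r < 2 * k /\ x = 7 * k - 2 + q * (2 * k) + r.
  exists ((x - (7 * k - 2)) %/ (2 * k)), ((x - (7 * k - 2)) %% (2 * k)).
  by split; [exact: ltn_pmod | have := divn_eq (x - (7 * k - 2)) (2 * k); lia].
case: (leqP k r) => [lekr | ltrk].
  exists r; first lia.
  by rewrite (_ : x - r = 7 * k - 2 + q * (2 * k)) ?stage3_tail_mul ?andbT /stage4; lia.
case: q xE => [|[|q]] xE; try lia.
rewrite !mulSn in xE; case: (ltnP r (k - 1)) => [ltr1 | ger1].
  exists (4 * k + r); first lia.
  by rewrite (_ : x - _ = 7 * k - 2 + q * (2 * k)) ?stage3_tail_mul ?andbT /stage4; lia.
exists (7 * k - 1); first lia.
rewrite (_ : stage4 k _ = true) /=; last by rewrite /stage4; lia.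
case: q xE => [|q] xE; first by apply: stage3_blocks; lia.
by rewrite (_ : x - _ = 7 * k - 2 + q * (2 * k)) ?stage3_tail_mul //; rewrite mulSn; lia.
Qed.

Lemma stage4_move x m : m <= x -> stage3 k m -> ~~ stage4 k x ->
  exists2 y, y <= x & stage4 k y && stage3 k (x - y).
Proof.
move=> lemx /stage3_cases S3m nS4x.
case: (leqP (10 * k - 2) x) => [le10x | lt10x]; first exact: stage4_move_tail.
have {S3m lemx} lekx : k <= x by lia.
rewrite stage4E lt10x andbT in nS4x.
have [m' range /andP[lem'x Mxm']] := Mlim_move (ltnW k_gt1) lekx nS4x.
exists (x - m'); rewrite ?leq_subr // subKn // stage3_blocks ?range // andbT.
by rewrite stage4E Mxm'; lia.
Qed.

Lemma Pset_stage4 : Pset (stage3 k) =1 stage4 k.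
Proof.
apply: Pset_char; first by apply/negP => /stage3_cases; lia.
- by move=> x S4x; exists k; [move: S4x; rewrite /stage4; lia | apply: stage3_blocks; lia].
- exact: stage4_no_move.
- exact: stage4_move.
Qed.

Lemma Pset_stage4_Mlim : Pset (stage4 k) =1 Mlim k.
Proof.
apply: Pset_Mlim => [|m range|m]; first lia.
  by rewrite /stage4 range.
by rewrite stage4E => /andP[].
Qed.

Lemma Miter_pred1 :
  [/\ Miter 1 (pred1 k) =1 stage1 k, Miter 2 (pred1 k) =1 stage2 k,
      Miter 3 (pred1 k) =1 stage3 k, Miter 4 (pred1 k) =1 stage4 k
    & Miter 5 (pred1 k) =1 Mlim k].
Proof.
have k_gt0 : 0 < k by lia.
have M1 : Miter 1 (pred1 k) =1 stage1 k := Pset_stage1 k_gt0.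
have M2 := Miter_succ M1 (Pset_stage2 k_gt0).
have M3 := Miter_succ M2 Pset_stage3; have M4 := Miter_succ M3 Pset_stage4.
by split=> //; apply: Miter_succ M4 Pset_stage4_Mlim.
Qed.

End LaterStages.

Lemma Pset_Mlim_id k : 0 < k -> Pset (Mlim k) =1 Mlim k.
Proof.
move=> k_gt0; apply: Pset_Mlim => // m range.
by rewrite /Mlim /= modn_small //; lia.
Qed.

Lemma Pset_pred1_0 : Pset (pred1 0) =1 pred0.
Proof. by []. Qed.

Lemma Pset_pred0 : Pset pred0 =1 pred0.
Proof. by apply: Pset_char. Qed.

Lemma Pset_pred1_1 : Pset (pred1 1) =1 Mlim 1.
Proof. by apply: Pset_Mlim => // m /=; [lia | move/eqP->]. Qed.

Lemma Minf_pred1 k x : Minf (pred1 k) x <-> Mlim k x.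
Proof.
case: k => [|[|k]].
- by rewrite (@Minf_fixpoint _ _ 1 Pset_pred0 Pset_pred1_0) /Mlim /=; lia.
- exact: (@Minf_fixpoint _ _ 1 (Pset_Mlim_id _) Pset_pred1_1).
- have [_ _ _ _ M5] := @Miter_pred1 k.+2 erefl.
  exact: Minf_fixpoint (Pset_Mlim_id _) M5 x.
Qed.

Lemma phi_pred1_0 : phi_is (pred1 0) 1.
Proof. by apply: (@phi_is_fixpoint _ _ 1 Pset_pred0 Pset_pred1_0) => -[|//] _; exists 0. Qed.

Lemma phi_pred1_1 : phi_is (pred1 1) 1.
Proof.
by apply: (@phi_is_fixpoint _ _ 1 (Pset_Mlim_id (ltn0Sn 0)) Pset_pred1_1) => -[|//] _; exists 3.
Qed.

Lemma phi_pred1 k : 1 < k -> phi_is (pred1 k) 5.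
Proof.
move=> k_gt1; have [M1 M2 M3 M4 M5] := Miter_pred1 k_gt1.
apply: phi_is_fixpoint (Pset_Mlim_id (ltnW k_gt1)) M5 _ => -[|[|[|[|[|//]]]]] _.
- have r : k.+1 %% (3 * k - 1) = k.+1 by apply: modn_small; lia.
  by exists k.+1; rewrite /= /Mlim /= r; lia.
- have r1 : 3 * k %% (2 * k) = k by rewrite (@modn_between 1); lia.
  have r2 : 3 * k %% (3 * k - 1) = 1 by rewrite (@modn_between 1); lia.
  by exists (3 * k); rewrite M1 /stage1 /Mlim /= r1 r2; lia.
- have r1 : (6 * k - 1) %% (2 * k) = 2 * k - 1 by rewrite (@modn_between 2); lia.
  have r2 : (6 * k - 1) %% (3 * k - 1) = 1 by rewrite (@modn_between 2); lia.
  by exists (6 * k - 1); rewrite M2 /stage2 /Mlim /= r1 r2; lia.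
- have S3 : stage3 k (9 * k - 2).
    by apply: stage3_tail; [lia | rewrite (@modn_between 4); lia].
  have r : (9 * k - 2) %% (3 * k - 1) = 1 by rewrite (@modn_between 3); lia.
  by exists (9 * k - 2); rewrite M3 S3 /Mlim /= r; lia.
- have r : (13 * k - 4) %% (3 * k - 1) = k by rewrite (@modn_between 4); lia.
  by exists (13 * k - 4); rewrite M4 (stage4E k_gt1) /Mlim /= r; lia.
Qed.

Theorem corollary10 :
  (forall k : nat, forall x : nat, Minf (pred1 k) x <-> Mk k x) /\
  phi_is (pred1 0) 1 /\ phi_is (pred1 1) 1 /\
  (forall k : nat, 2 <= k -> phi_is (pred1 k) 5).
Proof.
split; first by move=> k x; rewrite Minf_pred1 Mk_Mlim.
by split; [exact: phi_pred1_0 | split; [exact: phi_pred1_1 | exact: phi_pred1]].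
Qed.
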